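(* Fix $n\ge2$ and $1\le m\le n$. Consider the following game. Alice chooses $\epsilon_0>0$ and Bob chooses an $n\times n$ $(m,\epsilon_0)$-matrix $A_0$; then Alice chooses $\epsilon_1>0$ (knowing $A_0$) and Bob chooses an $n\times n$ $(m,\epsilon_1)$-matrix $A_1$; and so on inductively, producing $(A_s)_{s\ge0}$. Let $A_{r,s}=A_rA_{r+1}\cdots A_s$ for $r<s$. Alice wins if there exist $\bar\epsilon_r>0$ ($r\ge0$) such that for every $r\ge0$ and every $s>r$, $A_{r,s}$ is an $(m,\bar\epsilon_r)$-matrix, and $\bar\epsilon_r\to0$ as $r\to\infty$; otherwise Bob wins. Then Alice has a winning strategy.
   Context: For $\epsilon>0$ and $1\le m\le n$, an $n\times n$ nonnegative matrix $A=(a_{ij})$ with positive diagonal entries is an $(m,\epsilon)$-matrix if $a_{ij}/a_{jj}<\epsilon$ for all $j\le m$ and $i\ne j$. *)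

From HB Require Import structures.
From mathcomp Require Import all_boot all_order all_algebra.
From mathcomp Require Import all_classical all_reals all_analysis.
Set Implicit Arguments. Unset Strict Implicit. Unset Printing Implicit Defensive.
Import Order.TTheory GRing.Theory Num.Theory.
Local Open Scope ring_scope.

(* An n x n nonnegative matrix with positive diagonal entries such that
   a_ij / a_jj < eps for all columns j <= m (1-indexed, i.e. val j < m
   0-indexed) and all rows i <> j. *)
Definition meps_matrix (R : realType) (n m : nat) (eps : R) (A : 'M[R]_n) : Prop :=
  (forall i j : 'I_n, 0 <= A i j) /\
  (forall i : 'I_n, 0 < A i i) /\
  (forall i j : 'I_n, (val j < m)%N -> i != j -> A i j / A j j < eps).

Definition mxprod_range (R : realType) (n : nat) (A : nat -> 'M[R]_n) (r s : nat)
  : 'M[R]_n := \big[mulmx/1%:M]_(r <= i < s.+1) A i.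

From HB Require Import structures.
From mathcomp Require Import all_boot all_order all_algebra.
From mathcomp Require Import all_classical all_reals all_analysis.
From mathcomp Require Import lra.
Set Implicit Arguments. Unset Strict Implicit.
Import Order.TTheory GRing.Theory Num.Theory.
Import numFieldNormedType.Exports.
Local Open Scope classical_set_scope.
Local Open Scope ring_scope.

(* Alice answers the history A_0, ..., A_(s-1) with eps_s = 2^-s / (1 + C_s),
   where C_s bounds the ratios (row sum i) / (diagonal entry j) of all the
   products A_(r,s-1) already played.  If P is an (m,e)-matrix and Q an
   (m,e')-matrix, then (PQ)_ij <= (P_ij + e' sum_k P_ik) Q_jj and
   (PQ)_jj >= P_jj Q_jj, so PQ is an (m, e + e' C)-matrix, C being such a
   ratio bound for P.  Since e' C_s <= 2^-s, induction on s shows that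
   A_(r,s) is an (m, 2^(1-r) - 2^-s)-matrix, and epsbar_r = 2^(1-r) wins. *)

Lemma mxprod_range_id (R : realType) n (A : nat -> 'M[R]_n) r :
  mxprod_range A r r = A r.
Proof. by rewrite -[LHS]/(\prod_(r <= i < r.+1) A i) big_nat1. Qed.

Lemma mxprod_range_recr (R : realType) n (A : nat -> 'M[R]_n) r s :
  (r <= s.+1)%N -> mxprod_range A r s.+1 = mxprod_range A r s *m A s.+1.
Proof. move=> rs; rewrite -[LHS]/(\prod_(r <= i < s.+2) A i) big_nat_recr //. Qed.

Section NonnegativeMatrices.
Variables (R : numDomainType) (n : nat) (P Q : 'M[R]_n).
Hypotheses (P_ge0 : forall i j, 0 <= P i j) (Q_ge0 : forall i j, 0 <= Q i j).

Lemma mulmx_ge0 i j : 0 <= (P *m Q) i j.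
Proof. by rewrite mxE sumr_ge0 // => k _; rewrite mulr_ge0. Qed.

Lemma mulmx_diag_ge j : P j j * Q j j <= (P *m Q) j j.
Proof.
by rewrite mxE (bigD1 j) //= lerDl sumr_ge0 // => k _; rewrite mulr_ge0.
Qed.

Lemma mulmx_entry_le (e : R) i j :
  0 <= e -> (forall k, k != j -> Q k j <= e * Q j j) ->
  (P *m Q) i j <= (P i j + e * \sum_k P i k) * Q j j.
Proof.
move=> e_ge0 Qj_le.
rewrite mxE (bigD1 j) //= mulrDl lerD2l mulr_sumr mulr_suml.
apply: (@le_trans _ _ (\sum_(k | k != j) e * P i k * Q j j)).
  apply: ler_sum => k /Qj_le Qkj_le.
  by rewrite -mulrA mulrCA ler_wpM2l.
by rewrite [leRHS](bigD1 j) //= lerDr !mulr_ge0.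
Qed.

End NonnegativeMatrices.

Lemma mulmx_ratio_le (R : numFieldType) n (P Q : 'M[R]_n) (e : R) i j :
  (forall a b, 0 <= P a b) -> (forall a b, 0 <= Q a b) ->
  0 < P j j -> 0 < Q j j -> 0 <= e ->
  (forall k, k != j -> Q k j <= e * Q j j) ->
  (P *m Q) i j / (P *m Q) j j <= (P i j + e * \sum_k P i k) / P j j.
Proof.
move=> P_ge0 Q_ge0 Pjj_gt0 Qjj_gt0 e_ge0 Qj_le.
have PQjj_gt0 : 0 < P j j * Q j j by rewrite mulr_gt0.
apply: (@le_trans _ _ ((P i j + e * \sum_k P i k) * Q j j / (P j j * Q j j))).
  apply: ler_pM; rewrite ?invr_ge0 ?mulmx_ge0 ?mulmx_entry_le //.
  by rewrite lef_pV2 ?posrE ?mulmx_diag_ge // (lt_le_trans PQjj_gt0) ?mulmx_diag_ge.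
by rewrite [P j j * _]mulrC invfM mulrA mulfK ?gt_eqF.
Qed.

Definition row_ratio_bound (R : realFieldType) n (P : 'M[R]_n) : R :=
  \big[Num.max/0]_i \big[Num.max/0]_j ((\sum_k P i k) / P j j).

Lemma le_row_ratio_bound (R : realFieldType) n (P : 'M[R]_n) i j :
  (\sum_k P i k) / P j j <= row_ratio_bound P.
Proof.
by apply: le_trans (le_bigmax _ _ i); apply: le_bigmax (fun j => _ / P j j) j.
Qed.

Section MepsMatrix.
Variables (R : realType) (n m : nat).

Lemma meps_matrix_mono (e e' : R) (A : 'M[R]_n) :
  e <= e' -> meps_matrix m e A -> meps_matrix m e' A.
Proof.
move=> le_ee' [A_ge0 [Adiag Aratio]]; split=> //; split=> // i j jm ij.
exact: lt_le_trans (Aratio i j jm ij) le_ee'.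
Qed.

Lemma meps_matrix_mul (e e' : R) (P Q : 'M[R]_n) :
  0 <= e' -> meps_matrix m e P -> meps_matrix m e' Q ->
  meps_matrix m (e + e' * row_ratio_bound P) (P *m Q).
Proof.
move=> e'_ge0 [P_ge0 [Pdiag Pratio]] [Q_ge0 [Qdiag Qratio]].
split; first exact: mulmx_ge0.
split=> [i|i j jm ij].
  by apply: lt_le_trans (mulmx_diag_ge P_ge0 Q_ge0 i); rewrite mulr_gt0.
have Qcol_le k : k != j -> Q k j <= e' * Q j j.
  by move=> kj; rewrite -ler_pdivrMr // ltW // Qratio.
apply: le_lt_trans (mulmx_ratio_le i P_ge0 Q_ge0 (Pdiag j) (Qdiag j) e'_ge0 Qcol_le) _.
by rewrite mulrDl -mulrA ltr_leD ?Pratio // ler_wpM2l ?le_row_ratio_bound.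
Qed.

End MepsMatrix.

Section AliceStrategy.
Variables (R : realType) (n : nat).

Definition history_bound (h : seq 'M[R]_n) : R :=
  \big[Num.max/0]_(r < size h) row_ratio_bound (mxprod_range (nth 0 h) r (size h).-1).

Definition alice_strategy (h : seq 'M[R]_n) : R :=
  2^-1 ^+ size h / (1 + history_bound h).

Lemma history_bound_ge0 h : 0 <= history_bound h.
Proof. exact: bigmax_ge_id. Qed.

Lemma le_history_bound (A : nat -> 'M[R]_n) r s : (r <= s)%N ->
  row_ratio_bound (mxprod_range A r s) <= history_bound (mkseq A s.+1).
Proof.
rewrite -ltnS => r_lt; rewrite /history_bound size_mkseq.
have -> : mxprod_range A r s = mxprod_range (nth 0 (mkseq A s.+1)) r s.
  by apply: eq_big_nat => t /andP[_ t_lt]; rewrite nth_mkseq.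
exact: le_bigmax _ _ (Ordinal r_lt).
Qed.

Lemma alice_strategy_gt0 h : 0 < alice_strategy h.
Proof.
by rewrite divr_gt0 ?exprn_gt0 ?invr_gt0 // ltr_pwDl ?history_bound_ge0.
Qed.

Lemma alice_strategy_le h : alice_strategy h <= 2^-1 ^+ size h.
Proof.
rewrite ler_pdivrMr ?ltr_pwDl ?history_bound_ge0 // ler_peMr ?exprn_ge0 ?invr_ge0 //.
by rewrite lerDl history_bound_ge0.
Qed.

Lemma alice_strategy_mul_le h :
  alice_strategy h * history_bound h <= 2^-1 ^+ size h.
Proof.
rewrite mulrAC ler_pdivrMr ?ltr_pwDl ?history_bound_ge0 //.
by rewrite ler_wpM2l ?exprn_ge0 ?invr_ge0 // lerDr.
Qed.

End AliceStrategy.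

Lemma meps_matrix_mxprod_range (R : realType) n m (A : nat -> 'M[R]_n) r s :
  (forall t, meps_matrix m (alice_strategy (mkseq A t)) (A t)) -> (r <= s)%N ->
  meps_matrix m (2 * 2^-1 ^+ r - 2^-1 ^+ s) (mxprod_range A r s).
Proof.
move=> A_meps /subnKC <-; elim: (s - r)%N => [|d IH].
  rewrite addn0 mxprod_range_id; apply: meps_matrix_mono (A_meps r).
  by have := alice_strategy_le (mkseq A r); rewrite size_mkseq; lra.
rewrite addnS mxprod_range_recr ?leqW ?leq_addr //.
apply: meps_matrix_mono (meps_matrix_mul (ltW (alice_strategy_gt0 _)) IH (A_meps _)).
set t := (r + d)%N; set a := alice_strategy (mkseq A t.+1).
have halve : 2^-1 ^+ t = 2 * 2^-1 ^+ t.+1 :> R.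
  by rewrite exprS mulrA mulfV ?mul1r.
have a_bound : a * row_ratio_bound (mxprod_range A r t) <= 2^-1 ^+ t.+1.
  rewrite -[in leRHS](size_mkseq A t.+1); apply: le_trans (alice_strategy_mul_le _).
  by rewrite ler_wpM2l ?le_history_bound ?leq_addr // ltW ?alice_strategy_gt0.
lra.
Qed.

Theorem theorem2p3 (R : realType) (n m : nat) :
  (2 <= n)%N -> (1 <= m)%N -> (m <= n)%N ->
  exists alice : seq 'M[R]_n -> R,
    (forall h, 0 < alice h) /\
    forall A : nat -> 'M[R]_n,
      (forall s : nat, meps_matrix m (alice (mkseq A s)) (A s)) ->
      exists epsbar : nat -> R,
        (forall r, 0 < epsbar r) /\
        (forall r s : nat, (r < s)%N -> meps_matrix m (epsbar r) (mxprod_range A r s)) /\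
        (epsbar @ \oo --> (0 : R)).
Proof.
move=> _ _ _; exists (@alice_strategy R n); split; first exact: alice_strategy_gt0.
move=> A A_meps; exists (geometric 2 2^-1); split.
  by move=> r; rewrite mulr_gt0 ?exprn_gt0 ?invr_gt0.
split.
  move=> r s /ltnW r_le_s; apply: meps_matrix_mono (meps_matrix_mxprod_range A_meps r_le_s).
  by rewrite /= gerBl exprn_ge0 ?invr_ge0.
by apply: cvg_geometric; rewrite gtr0_norm ?invr_gt0 // invf_lt1 ?ltr1n.
Qed.
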